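(* Let $1\le k<n$ and let $P,Q\in\mathbb{H}_n$ be rank-$k$ orthogonal projections. Then $\operatorname{span}_{\mathbb{R}}S^{\mathbb{H}}(P)=\operatorname{span}_{\mathbb{R}}S^{\mathbb{H}}(Q)$ if and only if either $P=Q$, or $n=2k$ and $P=I-Q$.
   Context: $\mathbb{H}_n$ is the real space of $n\times n$ Hermitian matrices. $w_k(A)=\max\{|\operatorname{tr}(AP)|: P=P^*=P^2,\operatorname{tr}P=k\}$. For a rank-$k$ orthogonal projection $P$, $S^{\mathbb{H}}(P)=\{B\in\mathbb{H}_n:\operatorname{tr}(BP)=w_k(B)\}$. *)

From HB Require Import structures.
From mathcomp Require Import all_boot all_order all_algebra.
From mathcomp Require Import reals.
From mathcomp Require Import complex.
Set Implicit Arguments.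
Unset Strict Implicit.
Unset Printing Implicit Defensive.
Import Order.TTheory GRing.Theory Num.Theory.
Local Open Scope ring_scope.

Section Defs.
Variable R : realType.
Local Notation C := (complex R).

Definition adjmx (n : nat) (A : 'M[C]_n) : 'M[C]_n := (map_mx Num.conj A)^T.

Definition hermitian (n : nat) (A : 'M[C]_n) : Prop := adjmx A = A.

Definition rank_proj (n k : nat) (P : 'M[C]_n) : Prop :=
  adjmx P = P /\ P *m P = P /\ \tr P = k%:R.

Definition is_wk (n k : nat) (A : 'M[C]_n) (w : C) : Prop :=
  (exists P, rank_proj k P /\ `|\tr (A *m P)| = w) /\
  (forall P, rank_proj k P -> `|\tr (A *m P)| <= w).

Definition SH (n k : nat) (P : 'M[C]_n) (B : 'M[C]_n) : Prop :=
  hermitian B /\ is_wk k B (\tr (B *m P)).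

Definition rspan (n : nat) (S : 'M[C]_n -> Prop) (A : 'M[C]_n) : Prop :=
  exists (m : nat) (c : 'I_m -> R) (B : 'I_m -> 'M[C]_n),
    (forall i, S (B i)) /\ A = \sum_(i < m) (c i)%:C%C *: B i.
End Defs.

From Pilot Require Import Defs.
From HB Require Import structures.
From mathcomp Require Import all_boot all_order all_algebra.
From mathcomp Require Import reals complex ring.
Import Order.TTheory GRing.Theory Num.Theory.
Local Open Scope ring_scope.
Set Implicit Arguments.
Unset Strict Implicit.
Unset Printing Implicit Defensive.

(* Every B in S(P) commutes with P: if the block u^* B v between the range
   and the kernel of P were nonzero, tilting a vector u in the range of P
   towards v would produce a rank-k projection P' with tr(B P') > tr(B P).
   If the spans of S(P) and S(Q) agree, P therefore commutes with v v^* for v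
   in the range of Q (these lie in S(Q)) and with w w^* for w in the kernel of
   Q (as (1 + |w|^2) I - w w^* lies in S(Q)).  So P maps each of these vectors
   to itself or to 0, uniformly on the range and on the kernel of Q, and the
   trace leaves only P = Q or P = I - Q with n = 2k.  Conversely, when n = 2k,
   B in S(Q) gives (tr B / k) I - B in S(I - Q), and I lies in both sets. *)

(* The right-hand side is the Rayleigh quotient of B at the tilted vector of
   [tilt_forms], with a = |u|^2, b = |v|^2, p = u^* B u, q = v^* B v and
   N = |u^* B v|^2; the left-hand side is the one at u. *)
Lemma rotation_gain (F : numFieldType) (a b p q N : F) :
  0 < a -> 0 <= b -> 0 < N -> p \is Num.real -> q \is Num.real ->
  exists2 t, 0 < t &
    p / a < (p + 2 * t * N + t ^+ 2 * N * q) / (a + t ^+ 2 * N * b).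
Proof.
move=> a_gt0 b_ge0 N_gt0 pR qR.
set d := b * p - a * q.
have dR : d \is Num.real.
  by rewrite rpredB ?rpredM ?(gtr0_real a_gt0) ?(ger0_real b_ge0).
have d1_gt0 : 0 < 1 + `|d| by rewrite ltr_pwDl.
pose t := a / (1 + `|d|).
have t_gt0 : 0 < t by rewrite divr_gt0.
have td_lt : t * d < a.
  apply: le_lt_trans (ler_wpM2l (ltW t_gt0) (real_ler_norm dR)) _.
  by rewrite mulrAC ltr_pdivrMr // mulrDr mulr1 ltrDr.
have den_gt0 : 0 < a + t ^+ 2 * N * b.
  exact/ltr_pwDl/mulr_ge0/b_ge0/mulr_ge0/ltW/N_gt0/exprn_ge0/ltW.
exists t => //; rewrite -subr_gt0.
have -> : (p + 2 * t * N + t ^+ 2 * N * q) / (a + t ^+ 2 * N * b) - p / a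
    = t * N * (2 * a - t * d) / (a * (a + t ^+ 2 * N * b)).
  by rewrite /d; field; rewrite ?gt_eqF.
apply/divr_gt0/mulr_gt0/den_gt0 => //; apply/mulr_gt0; first exact: mulr_gt0.
by rewrite subr_gt0 mulr_natl mulr2n ltr_wpDl ?ltW.
Qed.

Section Adjoint.
Variable R : realType.
Local Notation C := (complex R).

Definition adj m n (A : 'M[C]_(m, n)) : 'M[C]_(n, m) := (map_mx Num.conj A)^T.

Lemma adjmxE n (A : 'M[C]_n) : adjmx A = adj A. Proof. by []. Qed.

Lemma adjK m n (A : 'M[C]_(m, n)) : adj (adj A) = A.
Proof. by apply/matrixP=> i j; rewrite !mxE conjCK. Qed.

Lemma adjM m n p (A : 'M[C]_(m, n)) (B : 'M[C]_(n, p)) :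
  adj (A *m B) = adj B *m adj A.
Proof.
apply/matrixP=> i j; rewrite !mxE rmorph_sum; apply: eq_bigr => l _.
by rewrite !mxE rmorphM mulrC.
Qed.

Lemma adjD m n (A B : 'M[C]_(m, n)) : adj (A + B) = adj A + adj B.
Proof. by apply/matrixP=> i j; rewrite !mxE rmorphD. Qed.

Lemma adjN m n (A : 'M[C]_(m, n)) : adj (- A) = - adj A.
Proof. by apply/matrixP=> i j; rewrite !mxE rmorphN. Qed.

Lemma adjB m n (A B : 'M[C]_(m, n)) : adj (A - B) = adj A - adj B.
Proof. by rewrite adjD adjN. Qed.

Lemma adjZ m n c (A : 'M[C]_(m, n)) : adj (c *: A) = c^* *: adj A.
Proof. by apply/matrixP=> i j; rewrite !mxE rmorphM. Qed.

Lemma adj_scalar n c : adj (c%:M : 'M[C]_n) = c^*%:M.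
Proof.
apply/matrixP=> i j; rewrite !mxE eq_sym.
by case: (i == j); rewrite ?mulr1n ?mulr0n ?rmorph0.
Qed.

Lemma adj1 n : adj (1%:M : 'M[C]_n) = 1%:M.
Proof. by rewrite adj_scalar rmorph1. Qed.

Lemma adj0 m n : adj (0 : 'M[C]_(m, n)) = 0.
Proof. by apply/matrixP=> i j; rewrite !mxE rmorph0. Qed.

Lemma mxtrace_adj n (A : 'M[C]_n) : \tr (adj A) = (\tr A)^*.
Proof. by rewrite /mxtrace rmorph_sum; apply: eq_bigr => i _; rewrite !mxE. Qed.

Lemma dot_ge0 n (x : 'cV[C]_n) : 0 <= (adj x *m x) 0 0.
Proof.
by rewrite !mxE sumr_ge0 // => i _; rewrite !mxE mulrC mul_conjC_ge0.
Qed.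

Lemma dot_eq0 n (x : 'cV[C]_n) : ((adj x *m x) 0 0 == 0) = (x == 0).
Proof.
apply/idP/eqP => [|->]; last by rewrite adj0 mul0mx mxE.
rewrite !mxE psumr_eq0 => [/allP x0|i _]; last by rewrite !mxE mulrC mul_conjC_ge0.
apply/matrixP=> i j; rewrite (ord1 j) mxE.
by have := x0 i (mem_index_enum _); rewrite !mxE mulrC mul_conjC_eq0 => /eqP.
Qed.

Lemma dot_gt0 n (x : 'cV[C]_n) : (0 < (adj x *m x) 0 0) = (x != 0).
Proof. by rewrite lt_def dot_eq0 dot_ge0 andbT. Qed.

Lemma form_conj n (B : 'M[C]_n) (x y : 'cV[C]_n) : adj B = B ->
  ((adj x *m B *m y) 0 0)^* = (adj y *m B *m x) 0 0.
Proof.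
move=> aB; have -> : ((adj x *m B *m y) 0 0)^* = adj (adj x *m B *m y) 0 0.
  by rewrite !mxE.
by rewrite !adjM adjK aB mulmxA.
Qed.

Lemma dot_conj n (x : 'cV[C]_n) : ((adj x *m x) 0 0)^* = (adj x *m x) 0 0.
Proof. by have := form_conj x x (adj1 n); rewrite !mulmx1. Qed.

Lemma mxtrace_rank1 n (x y : 'cV[C]_n) : \tr (x *m adj y) = (adj y *m x) 0 0.
Proof. by rewrite mxtrace_mulC trace_mx11. Qed.

Lemma mxtrace_rank1_mul n (M : 'M[C]_n) (v : 'cV[C]_n) :
  \tr (v *m adj v *m M) = (adj v *m M *m v) 0 0.
Proof. by rewrite -mulmxA mxtrace_mulC trace_mx11. Qed.

Lemma mx_entry_form n (A : 'M[C]_n) i j :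
  A i j = (adj (delta_mx i 0 : 'cV_n) *m A *m (delta_mx j 0 : 'cV_n)) 0 0.
Proof.
have -> : adj (delta_mx i 0 : 'cV_n) = delta_mx 0 i.
  by apply/matrixP=> a b; rewrite !mxE andbC conjC_nat.
by rewrite -rowE -colE !mxE.
Qed.

Lemma form_add_scale n (M : 'M[C]_n) (u v : 'cV[C]_n) (s : C) :
  (adj (u + s *: v) *m M *m (u + s *: v)) 0 0 =
    (adj u *m M *m u) 0 0 + s * (adj u *m M *m v) 0 0
    + s^* * (adj v *m M *m u) 0 0 + s^* * s * (adj v *m M *m v) 0 0.
Proof.
rewrite -!trace_mx11 adjD adjZ !mulmxDl !mulmxDr -!scalemxAl -!scalemxAr.
by rewrite !mxtraceD !mxtraceZ; ring.
Qed.

End Adjoint.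

Section Projections.
Variable R : realType.
Local Notation C := (complex R).

Lemma rank_projE n k (P : 'M[C]_n) : rank_proj k P ->
  [/\ adj P = P, P *m P = P & \tr P = k%:R].
Proof. by case=> ? []. Qed.

Lemma herm_idem_form n (P : 'M[C]_n) (x : 'cV[C]_n) : adj P = P -> P *m P = P ->
  adj x *m P *m x = adj (P *m x) *m (P *m x).
Proof. by move=> aP PP; rewrite adjM aP -!mulmxA (mulmxA P) PP. Qed.

Lemma rank_proj_compl n k j (P : 'M[C]_n) : (k + j)%N = n -> rank_proj k P ->
  rank_proj j (1%:M - P).
Proof.
move=> hn /rank_projE[aP PP tP]; split; first by rewrite adjmxE adjB adj1 aP.
split; first by rewrite mulmxBl mul1mx mulmxBr mulmx1 PP subrr subr0.
by rewrite mxtraceD raddfN /= mxtrace1 tP -hn natrD addrC addKr.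
Qed.

Lemma proj_form_ge0 n k (P : 'M[C]_n) (x : 'cV[C]_n) : rank_proj k P ->
  0 <= (adj x *m P *m x) 0 0.
Proof. by case/rank_projE=> aP PP _; rewrite herm_idem_form ?dot_ge0. Qed.

Lemma proj_form_le_dot n k (P : 'M[C]_n) (x : 'cV[C]_n) : rank_proj k P ->
  (adj x *m P *m x) 0 0 <= (adj x *m x) 0 0.
Proof.
case/rank_projE=> aP PP _; rewrite -subr_ge0.
have -> : (adj x *m x) 0 0 - (adj x *m P *m x) 0 0
    = (adj x *m (1%:M - P) *m x) 0 0 by rewrite mulmxBr mulmx1 mulmxBl !mxE.
rewrite herm_idem_form ?dot_ge0 ?adjB ?adj1 ?aP //.
by rewrite mulmxBl mul1mx mulmxBr mulmx1 PP subrr subr0.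
Qed.

Definition rank1_proj n (u : 'cV[C]_n) : 'M[C]_n :=
  ((adj u *m u) 0 0)^-1 *: (u *m adj u).

Lemma rank1_proj_adj n (u : 'cV[C]_n) : adj (rank1_proj u) = rank1_proj u.
Proof. by rewrite adjZ adjM adjK fmorphV /= dot_conj. Qed.

Lemma rank1_projK n (u : 'cV[C]_n) : u != 0 -> rank1_proj u *m u = u.
Proof.
move=> u0; rewrite -scalemxAl.
have -> : u *m adj u *m u = (adj u *m u) 0 0 *: u.
  by rewrite -mulmxA {1}[adj u *m u]mx11_scalar mul_mx_scalar.
by rewrite scalerA mulVf ?scale1r ?dot_eq0.
Qed.

Lemma rank1_proj_ortho n (u v : 'cV[C]_n) : adj u *m v = 0 -> rank1_proj u *m v = 0.
Proof. by move=> uv; rewrite -scalemxAl -mulmxA uv mulmx0 scaler0. Qed.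

Lemma rank_proj_rank1 n (u : 'cV[C]_n) : u != 0 -> rank_proj 1 (rank1_proj u).
Proof.
move=> u0; split; first exact: rank1_proj_adj.
split; last by rewrite mxtraceZ mxtrace_rank1 mulVf ?dot_eq0.
have uE : adj u *m rank1_proj u = adj u.
  by rewrite -rank1_proj_adj -adjM rank1_projK.
by rewrite [in LHS]/rank1_proj -scalemxAl -mulmxA uE.
Qed.

Lemma mxtrace_mul_rank1_proj n (B : 'M[C]_n) (u : 'cV[C]_n) :
  \tr (B *m rank1_proj u) = (adj u *m B *m u) 0 0 / (adj u *m u) 0 0.
Proof. by rewrite -scalemxAr mxtraceZ mulmxA mxtrace_rank1 mulmxA mulrC. Qed.

Lemma rank_proj_exchange n k (P : 'M[C]_n) (u w : 'cV[C]_n) :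
  rank_proj k P -> P *m u = u -> u != 0 -> w != 0 ->
  (P - rank1_proj u) *m w = 0 ->
  rank_proj k (P - rank1_proj u + rank1_proj w).
Proof.
move=> /rank_projE[aP PP tP] Pu u0 w0 Gw.
have [aE EE tE] := rank_projE (rank_proj_rank1 u0).
have [aF FF tF] := rank_projE (rank_proj_rank1 w0).
have EP : rank1_proj u *m P = rank1_proj u.
  by rewrite -scalemxAl -mulmxA -aP -adjM Pu.
have PE : P *m rank1_proj u = rank1_proj u.
  by rewrite -[LHS]adjK adjM aP aE EP aE.
have GG : (P - rank1_proj u) *m (P - rank1_proj u) = P - rank1_proj u.
  by rewrite mulmxBl !mulmxBr PP PE EP EE subrr subr0.
have GF : (P - rank1_proj u) *m rank1_proj w = 0.
  by rewrite -scalemxAr mulmxA Gw mul0mx scaler0.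
have FG : rank1_proj w *m (P - rank1_proj u) = 0.
  by rewrite -[LHS]adjK adjM adjB aP aE aF GF adj0.
split; first by rewrite adjmxE !adjD adjN aP aE aF.
split; first by rewrite mulmxDl !(mulmxDr _ _ (rank1_proj w)) GG GF FG FF addr0 add0r.
by rewrite !mxtraceD raddfN /= tP tE tF subrK.
Qed.

End Projections.

Section TraceMaximizers.
Variable R : realType.
Local Notation C := (complex R).

Lemma SH_one n k (Q : 'M[C]_n) : rank_proj k Q -> SH k Q 1%:M.
Proof.
move=> rQ; have [_ _ tQ] := rank_projE rQ.
split; first by rewrite /Defs.hermitian adjmxE adj1.
split; first by exists Q; rewrite mul1mx tQ normr_nat.
by move=> P' /rank_projE[_ _ tP']; rewrite !mul1mx tP' tQ normr_nat.
Qed.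

Lemma SH_rank1 n k (Q : 'M[C]_n) (v : 'cV[C]_n) :
  rank_proj k Q -> Q *m v = v -> SH k Q (v *m adj v).
Proof.
move=> rQ Qv; rewrite /SH mxtrace_rank1_mul -mulmxA Qv.
split; first by rewrite /Defs.hermitian adjmxE adjM adjK.
split; first by exists Q; rewrite mxtrace_rank1_mul -mulmxA Qv ger0_norm ?dot_ge0.
move=> P' rP'; rewrite mxtrace_rank1_mul ger0_norm ?(proj_form_ge0 v rP') //.
exact: proj_form_le_dot rP'.
Qed.

Lemma SH_corank1 n k (Q : 'M[C]_n) (w : 'cV[C]_n) : (1 <= k)%N ->
  rank_proj k Q -> Q *m w = 0 ->
  SH k Q ((1 + (adj w *m w) 0 0)%:M - w *m adj w).
Proof.
move=> k_ge1 rQ Qw; have [_ _ tQ] := rank_projE rQ.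
set c := 1 + (adj w *m w) 0 0.
have c_ge0 : 0 <= c by rewrite addr_ge0 ?dot_ge0.
have trE P' : \tr P' = k%:R ->
    \tr ((c%:M - w *m adj w) *m P') = c * k%:R - (adj w *m P' *m w) 0 0.
  by move=> tP'; rewrite mulmxBl mul_scalar_mx raddfB /= mxtraceZ tP' mxtrace_rank1_mul.
have trQ : \tr ((c%:M - w *m adj w) *m Q) = c * k%:R.
  by rewrite trE // -mulmxA Qw mulmx0 mxE subr0.
split.
  rewrite /Defs.hermitian adjmxE adjB adj_scalar adjM adjK.
  by rewrite rmorphD rmorph1 /= dot_conj.
split; first by exists Q; rewrite trQ ger0_norm // mulr_ge0 ?ler0n.
move=> P' rP'; have [_ _ tP'] := rank_projE rP'.
have form_ge0 := proj_form_ge0 w rP'.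
rewrite trQ trE // ger0_norm ?gerBl // subr_ge0.
apply: le_trans (proj_form_le_dot w rP') (le_trans _ (ler_peMr c_ge0 _)).
  by rewrite /c lerDr.
by rewrite ler1n.
Qed.

Lemma tilt_forms n (B : 'M[C]_n) (u v : 'cV[C]_n) (t : C) :
  adj B = B -> adj u *m v = 0 -> t^* = t ->
  let a := (adj u *m B *m v) 0 0 in let w := u + (t * a^*) *: v in
  (adj w *m w) 0 0 = (adj u *m u) 0 0 + t ^+ 2 * (a * a^*) * (adj v *m v) 0 0
  /\ (adj w *m B *m w) 0 0 = (adj u *m B *m u) 0 0 + 2 * t * (a * a^*)
                             + t ^+ 2 * (a * a^*) * (adj v *m B *m v) 0 0.
Proof.
move=> aB uv tR a w; have vu : adj v *m u = 0 by rewrite -[u]adjK -adjM uv adj0.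
have ss : (t * a^*)^* * (t * a^*) = t ^+ 2 * (a * a^*).
  by rewrite rmorphM /= conjCK tR; ring.
have z00 : (0 : 'M[C]_1) 0 0 = 0 by rewrite mxE.
split; last first.
  rewrite form_add_scale -(form_conj u v aB) -/a ss rmorphM /= conjCK tR.
  by ring.
have := form_add_scale 1%:M u v (t * a^*); rewrite !mulmx1 => ->.
by rewrite uv vu z00 !mulr0 !addr0 ss.
Qed.

Lemma max_trace_offdiag n k (B P : 'M[C]_n) (u v : 'cV[C]_n) :
  adj B = B -> rank_proj k P ->
  (forall P', rank_proj k P' -> `|\tr (B *m P')| <= \tr (B *m P)) ->
  P *m u = u -> P *m v = 0 -> (adj u *m B *m v) 0 0 = 0.
Proof.
move=> aB rP maxP Pu Pv; have [aP _ _] := rank_projE rP.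
have [->|u0] := eqVneq u 0; first by rewrite adj0 !mul0mx mxE.
have uv : adj u *m v = 0 by rewrite -Pu adjM aP -mulmxA Pv mulmx0.
set a := (adj u *m B *m v) 0 0; apply/eqP/contraT => a_neq0.
have al_gt0 : 0 < (adj u *m u) 0 0 by rewrite dot_gt0.
have N_gt0 : 0 < a * a^* by rewrite mul_conjC_gt0.
have [pR qR] : (adj u *m B *m u) 0 0 \is Num.real
               /\ (adj v *m B *m v) 0 0 \is Num.real.
  by split; apply/CrealP; apply: form_conj.
have [t t_gt0 gain] := rotation_gain al_gt0 (dot_ge0 v) N_gt0 pR qR.
have [dot_w form_w] := tilt_forms aB uv (conj_Creal (gtr0_real t_gt0)).
rewrite -/a -dot_w -form_w in gain; set w := u + _ *: v in dot_w form_w gain.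
have w0 : w != 0.
  rewrite -dot_gt0 dot_w.
  exact/ltr_pwDl/mulr_ge0/dot_ge0/mulr_ge0/ltW/N_gt0/exprn_ge0/ltW.
have Gw : (P - rank1_proj u) *m w = 0.
  rewrite mulmxBl !mulmxDr -!scalemxAr Pu Pv rank1_projK // rank1_proj_ortho //.
  by rewrite scaler0 addr0 subrr.
have trBP_ge0 : 0 <= \tr (B *m P) := le_trans (normr_ge0 _) (maxP _ rP).
have gain_gt0 : 0 < - ((adj u *m B *m u) 0 0 / (adj u *m u) 0 0)
                    + (adj w *m B *m w) 0 0 / (adj w *m w) 0 0.
  by rewrite addrC subr_gt0.
have := maxP _ (rank_proj_exchange rP Pu u0 w0 Gw).
rewrite mulmxDr mulmxBr mxtraceD raddfB /= !mxtrace_mul_rank1_proj -addrA.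
by rewrite gtr0_norm ?gerDl ?(lt_geF gain_gt0) // ltr_wpDl.
Qed.

Lemma SH_commute n k (P B : 'M[C]_n) : rank_proj k P -> SH k P B ->
  P *m B = B *m P.
Proof.
move=> rP [aB [_ maxP]]; rewrite /Defs.hermitian adjmxE in aB.
have [aP PP _] := rank_projE rP.
have PBPc : P *m B *m (1%:M - P) = 0.
  apply/matrixP => i j; rewrite mx_entry_form [RHS]mxE.
  rewrite -(max_trace_offdiag (u := P *m delta_mx i 0)
                              (v := (1%:M - P) *m delta_mx j 0) aB rP maxP).
  - by rewrite adjM aP !mulmxA.
  - by rewrite mulmxA PP.
  - by rewrite mulmxA mulmxBr mulmx1 PP subrr mul0mx.
have PBP : P *m B = P *m B *m P.
  by move/eqP: PBPc; rewrite mulmxBr mulmx1 subr_eq0 => /eqP.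
have : adj (P *m B) = adj (P *m B *m P) by rewrite -PBP.
by rewrite !adjM aP aB => ->; rewrite mulmxA -PBP.
Qed.

End TraceMaximizers.

Section Spans.
Variable R : realType.
Local Notation C := (complex R).

Lemma rspan1 n (S : 'M[C]_n -> Prop) B : S B -> rspan S B.
Proof.
by exists 1%N, (fun _ => 1), (fun _ => B); rewrite big_ord1 rmorph1 scale1r.
Qed.

Lemma rspan0 n (S : 'M[C]_n -> Prop) : rspan S 0.
Proof. by exists 0%N, (fun _ => 0), (fun _ => 0); split; [case | rewrite big_ord0]. Qed.

Lemma rspanD n (S : 'M[C]_n -> Prop) X Y : rspan S X -> rspan S Y -> rspan S (X + Y).
Proof.
move=> [m1 [c1 [B1 [SB1 ->]]]] [m2 [c2 [B2 [SB2 ->]]]].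
pose glue T (f1 : 'I_m1 -> T) (f2 : 'I_m2 -> T) (i : 'I_(m1 + m2)) :=
  match split i with inl j => f1 j | inr j => f2 j end.
exists (m1 + m2)%N, (glue _ c1 c2), (glue _ B1 B2).
split; first by move=> i; rewrite /glue; case: (split i).
by rewrite big_split_ord /glue; congr (_ + _); apply: eq_bigr => i _;
  rewrite ?(unsplitK (inl i)) ?(unsplitK (inr i)).
Qed.

Lemma rspanZ n (S : 'M[C]_n -> Prop) (r : R) X : rspan S X -> rspan S ((r%:C)%C *: X).
Proof.
move=> [m [c [B [SB ->]]]]; exists m, (fun i => r * c i), B; split => //.
by rewrite scaler_sumr; apply: eq_bigr => i _; rewrite scalerA rmorphM.
Qed.

Lemma rspan_sub n (S T : 'M[C]_n -> Prop) A :
  (forall B, S B -> rspan T B) -> rspan S A -> rspan T A.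
Proof.
move=> ST [m [c [B [SB ->]]]].
apply: (big_ind (rspan T)); [exact: rspan0 | exact: rspanD |].
by move=> i _; apply/rspanZ/ST.
Qed.

Lemma rspan_commute n k (P A : 'M[C]_n) : rank_proj k P -> rspan (SH k P) A ->
  P *m A = A *m P.
Proof.
move=> rP [m [c [B [SB ->]]]]; rewrite mulmx_sumr mulmx_suml.
by apply: eq_bigr => i _; rewrite -scalemxAr -scalemxAl (SH_commute rP (SB i)).
Qed.

Lemma SH_compl_span n k (Q B : 'M[C]_n) : (k + k)%N = n -> (0 < k)%N ->
  rank_proj k Q -> SH k Q B -> rspan (SH k (1%:M - Q)) B.
Proof.
move=> hn k_gt0 rQ [aB [[P0 [rP0 eP0]] maxQ]]; rewrite /Defs.hermitian adjmxE in aB.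
have compl (P' : 'M[C]_n) : rank_proj k P' -> rank_proj k (1%:M - P').
  exact: rank_proj_compl.
have complK (X : 'M[C]_n) : 1%:M - (1%:M - X) = X by rewrite opprB addrC subrK.
have trBR : \tr B \is Num.real by apply/CrealP; rewrite -mxtrace_adj aB.
pose c := complex.Re (\tr B) / k%:R.
have ck : (c%:C)%C * k%:R = \tr B.
  rewrite -[RHS]RRe_real // -(rmorph_nat (real_complex R)) -rmorphM /=.
  by rewrite divfK // pnatr_eq0 -lt0n.
pose Bc := (c%:C)%C%:M - B.
have trBc Q' : \tr Q' = k%:R -> \tr (Bc *m Q') = \tr (B *m (1%:M - Q')).
  move=> tQ'; rewrite /Bc mulmxBl mul_scalar_mx mulmxBr mulmx1.
  by rewrite !raddfB /= mxtraceZ tQ' ck.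
have [_ _ tQc] := rank_projE (compl _ rQ).
have SBc : SH k (1%:M - Q) Bc.
  have cR : ((c%:C)%C : C)^* = (c%:C)%C := conjc_real c.
  split; first by rewrite /Defs.hermitian adjmxE adjB adj_scalar aB cR.
  rewrite trBc // complK; split.
    have [_ _ tP0c] := rank_projE (compl _ rP0).
    by exists (1%:M - P0); rewrite trBc // complK; split => //; apply: compl.
  by move=> P' /[dup] rP' /rank_projE[_ _ tP']; rewrite trBc //; apply/maxQ/compl.
have -> : B = (c%:C)%C *: 1%:M + ((-1)%:C)%C *: Bc.
  by rewrite scalemx1 rmorphN1 scaleN1r /Bc opprB addrC subrK.
by apply: rspanD; apply: rspanZ; apply: rspan1 => //; apply: SH_one (compl _ rQ).
Qed.

End Spans.

Section Commutation.
Variable R : realType.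
Local Notation C := (complex R).

Lemma commute_rank1_eigen01 n (P : 'M[C]_n) (v : 'cV[C]_n) : P *m P = P ->
  P *m (v *m adj v) = v *m adj v *m P -> P *m v = v \/ P *m v = 0.
Proof.
move=> PP comm; have [->|v0] := eqVneq v 0; first by right; rewrite mulmx0.
set al := (adj v *m v) 0 0; set c := (adj v *m (P *m v)) 0 0.
have al0 : al != 0 by rewrite dot_eq0.
have : al *: (P *m v) = c *: v.
  have := congr1 (mulmx^~ v) comm; rewrite -!mulmxA [adj v *m v]mx11_scalar.
  by rewrite [adj v *m (P *m v)]mx11_scalar !mul_mx_scalar -scalemxAr.
move/(congr1 (fun X => al^-1 *: X)); rewrite /= !scalerA mulVf // scale1r => Pv.
have : P *m (P *m v) = P *m v by rewrite mulmxA PP.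
rewrite Pv -scalemxAr Pv scalerA => /eqP; rewrite -subr_eq0 -scalerBl.
rewrite scaler_eq0 (negPf v0) orbF -[X in _ - X]mulr1 -mulrBr mulf_eq0 subr_eq0.
by case/orP=> /eqP->; [right; rewrite scale0r | left; rewrite scale1r].
Qed.

Lemma mulmx_eigen01 n (P M : 'M[C]_n) :
  (forall x : 'cV[C]_n, P *m (M *m x) = M *m x \/ P *m (M *m x) = 0) ->
  P *m M = M \/ P *m M = 0.
Proof.
move=> eig; pose e j : 'cV[C]_n := delta_mx j 0.
have colsP (X Y : 'M[C]_n) : (forall j, X *m e j = Y *m e j) -> X = Y.
  by move=> XY; apply/matrixP => i j; move/matrixP/(_ i 0): (XY j); rewrite -!colE !mxE.
have [/existsP[j PMj] | /existsPn noPM] := boolP [exists j, P *m (M *m e j) != 0].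
  left; apply: colsP => i; rewrite -mulmxA.
  have Px : P *m (M *m e j) = M *m e j.
    by case: (eig (e j)) => // h; rewrite h eqxx in PMj.
  have x0 : M *m e j != 0 by rewrite -Px.
  case: (eig (e i)) => // Py.
  case: (eig (e j + e i)); rewrite !mulmxDr Px Py addr0 => h.
    by apply: (@addrI _ (M *m e j)); rewrite addr0 -h.
  by rewrite h eqxx in x0.
by right; apply: colsP => i; rewrite mul0mx -mulmxA; apply/eqP/negbNE/noPM.
Qed.

Lemma proj_eq_or_compl n k (P Q : 'M[C]_n) : (0 < k)%N -> (k < n)%N ->
  \tr P = k%:R -> \tr Q = k%:R ->
  P *m Q = Q \/ P *m Q = 0 ->
  P *m (1%:M - Q) = 1%:M - Q \/ P *m (1%:M - Q) = 0 ->
  P = Q \/ (n = 2 * k)%N /\ P = 1%:M - Q.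
Proof.
move=> k_gt0 k_lt_n tP tQ PQ PQc.
have splitP : P = P *m Q + P *m (1%:M - Q) by rewrite mulmxBr mulmx1 addrC subrK.
case: PQ PQc => PQ [] PQc; rewrite PQ PQc in splitP.
- move: tP; rewrite splitP addrC subrK mxtrace1 => /eqP; rewrite eqr_nat => /eqP nk.
  by rewrite nk ltnn in k_lt_n.
- by left; rewrite splitP addr0.
- right; split; last by rewrite splitP add0r.
  move: tP; rewrite splitP add0r raddfB /= mxtrace1 tQ => /eqP.
  by rewrite subr_eq -natrD eqr_nat mul2n addnn => /eqP.
- move: tP; rewrite splitP addr0 mxtrace0 => /eqP; rewrite eq_sym pnatr_eq0 => /eqP k0.
  by rewrite k0 in k_gt0.
Qed.

End Commutation.

Theorem mainTheorem10 (R : realType) (n k : nat) (P Q : 'M[complex R]_n) :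
  (1 <= k)%N -> (k < n)%N ->
  rank_proj k P -> rank_proj k Q ->
  ((forall A, rspan (SH k P) A <-> rspan (SH k Q) A) <->
   (P = Q \/ (n = 2 * k)%N /\ P = 1%:M - Q)).
Proof.
move=> k_gt0 k_lt_n rP rQ; have [_ PP tP] := rank_projE rP.
have [_ QQ tQ] := rank_projE rQ.
split=> [span_eq | [<- // | [hn ->]] A].
  have commP X : SH k Q X -> P *m X = X *m P.
    by move=> /rspan1/span_eq/(rspan_commute rP).
  apply: (proj_eq_or_compl k_gt0 k_lt_n tP tQ).
    apply: mulmx_eigen01 => x; apply: commute_rank1_eigen01 PP _.
    by apply/commP/SH_rank1; rewrite // mulmxA QQ.
  apply: mulmx_eigen01 => x; apply: commute_rank1_eigen01 PP _.
  have Qw : Q *m ((1%:M - Q) *m x) = 0.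
    by rewrite mulmxA mulmxBr mulmx1 QQ subrr mul0mx.
  move: ((1%:M - Q) *m x) Qw => w /(SH_corank1 k_gt0 rQ)/commP.
  by rewrite mulmxBr mulmxBl mul_mx_scalar mul_scalar_mx => /addrI/oppr_inj.
have hk : (k + k)%N = n by rewrite hn mul2n addnn.
have complK : 1%:M - (1%:M - Q) = Q by rewrite opprB addrC subrK.
split; apply: rspan_sub => B.
  by move/(SH_compl_span hk k_gt0 (rank_proj_compl hk rQ)); rewrite complK.
exact: SH_compl_span hk k_gt0 rQ.
Qed.
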